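(* Let $p,s\in\mathbb{N}$ be such that $p+1\leq s\leq 2^p$ and $s$ is a multiple of $4$. Then there is a UPB in $(\mathbb{C}^2)^{\otimes p}$ of cardinality $s$, with the possible exception of the case when $p\equiv 1\pmod 4$ and $s=2p+2$.
   Context: A product state in $(\mathbb{C}^2)^{\otimes p}$ is a vector $|v_1\rangle\otimes\cdots\otimes|v_p\rangle$ with each $|v_j\rangle\in\mathbb{C}^2$. A $p$-qubit unextendible product basis (UPB) is a finite set $\mathcal{S}\subseteq(\mathbb{C}^2)^{\otimes p}$ of unit product vectors that are pairwise orthogonal, such that no nonzero product vector outside $\mathcal{S}$ is orthogonal to every element of $\mathcal{S}$. *)

From HB Require Import structures.
From mathcomp Require Import all_boot all_order all_algebra.
Set Implicit Arguments. Unset Strict Implicit. Unset Printing Implicit Defensive.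
Import Order.TTheory GRing.Theory Num.Theory.
Local Open Scope ring_scope.

(* Computational basis of (C^2)^{⊗p}: bit strings of length p. *)
Definition bits (p : nat) := {ffun 'I_p -> 'I_2}.

(* A vector of (C^2)^{⊗p}, given by its coordinates in the computational basis. *)
Definition tvec (C : numClosedFieldType) (p : nat) := {ffun bits p -> C}.

(* The product vector |v_1> ⊗ ... ⊗ |v_p>, with each v_j ∈ C^2 a column vector. *)
Definition prodvec (C : numClosedFieldType) (p : nat) (v : 'I_p -> 'cV[C]_2)
  : tvec C p := [ffun x : bits p => \prod_(j < p) v j (x j) 0].

Definition is_product (C : numClosedFieldType) (p : nat) (u : tvec C p) : Prop :=
  exists v : 'I_p -> 'cV[C]_2, u = prodvec v.

Definition inner (C : numClosedFieldType) (p : nat) (u w : tvec C p) : C :=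
  \sum_(x : bits p) (u x)^* * w x.

(* Unextendible product basis: a finite set (duplicate-free list) of unit
   product vectors, pairwise orthogonal, such that every nonzero product
   vector orthogonal to all of them already belongs to the set. *)
Definition is_UPB (C : numClosedFieldType) (p : nat) (S : seq (tvec C p)) : Prop :=
  uniq S /\
  (forall u, u \in S -> is_product u /\ inner u u = 1) /\
  (forall u w, u \in S -> w \in S -> u != w -> inner u w = 0) /\
  (forall w : tvec C p, is_product w -> w != 0 ->
      (forall u, u \in S -> inner u w = 0) -> w \in S).

From HB Require Import structures.
From mathcomp Require Import all_boot all_order all_algebra.
From mathcomp Require Import zify ring.
Import Order.TTheory GRing.Theory Num.Theory.
Set Implicit Arguments. Unset Strict Implicit. Unset Printing Implicit Defensive.

(* The problem is first made combinatorial.  For each k, the vectors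
   (1, k) and (-k, 1) form an orthogonal basis of C^2, and vectors from
   different bases are never orthogonal to a common nonzero vector.  A
   "design" on p qubits is a list of labellings (one basis vector per qubit)
   in which any two members use the two vectors of one basis at some qubit,
   and which contains, for every labelling c, a member differing from c at
   every qubit.  Tensoring the labelled vectors turns a design of size s into
   a UPB of size s (upb_of_design).

   Designs are then produced combinatorially: by gluing designs along a
   design on further qubits (design_substitute), giving the full basis and
   the doubling a, b |-> a + b from p to p + 1 qubits; by a direct
   construction from a round-robin tournament for p < s <= 2p; and by one
   substitution for the size 20 on 6 qubits.  An induction on p
   (has_design_admissible) combines them. *)

(* A label (k, b) names one vector of the orthogonal basis
   {(1, k), (-k, 1)} of C^2: b = false gives (1, k), b = true gives (-k, 1). *)
Definition label := (nat * bool)%type.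

Definition complementary (l l' : label) := (l.1 == l'.1) && (l.2 != l'.2).

Lemma complementary_irr l : complementary l l = false.
Proof. by rewrite /complementary !eqxx. Qed.

Section QubitVectors.
Variable C : numClosedFieldType.
Local Open Scope ring_scope.

Definition qfst (l : label) : C := if l.2 then - (l.1)%:R else 1.
Definition qsnd (l : label) : C := if l.2 then 1 else (l.1)%:R.

Definition qnorm2 (l : label) : C := (1 + l.1 ^ 2)%N%:R.

Definition qvec (l : label) : 'cV[C]_2 :=
  sqrtC (qnorm2 l)^-1 *: \col_(i < 2) (if i == ord0 then qfst l else qsnd l).

Definition qinner (v w : 'cV[C]_2) : C := \sum_(b < 2) (v b 0)^* * w b 0.

Lemma qinnerE v w :
  qinner v w = (v ord0 0)^* * w ord0 0 + (v ord_max 0)^* * w ord_max 0.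
Proof.
rewrite /qinner big_ord_recl big_ord1.
by have -> : lift ord0 (ord0 : 'I_1) = ord_max :> 'I_2 by apply: val_inj.
Qed.

Lemma qinnerZ a b v w : qinner (a *: v) (b *: w) = a^* * b * qinner v w.
Proof. rewrite !qinnerE !mxE !rmorphM /=; ring. Qed.

Lemma qnorm2_neq0 l : qnorm2 l != 0.
Proof. by rewrite /qnorm2 pnatr_eq0 addnC addn1. Qed.

Lemma qscale_conj l : (sqrtC (qnorm2 l)^-1)^* = sqrtC (qnorm2 l)^-1.
Proof. by apply: geC0_conj; rewrite sqrtC_ge0 invr_ge0 ler0n. Qed.

Lemma qscale_neq0 l : sqrtC (qnorm2 l)^-1 != 0.
Proof. by rewrite sqrtC_eq0 invr_eq0 qnorm2_neq0. Qed.

(* Since the coordinates are real, the inner product against the vector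
   named by l is the linear form (x, y) |-> qfst l * x + qsnd l * y,
   up to the (nonzero) normalising factor. *)
Lemma qinner_qvec l w :
  qinner (qvec l) w
  = sqrtC (qnorm2 l)^-1 * (qfst l * w ord0 0 + qsnd l * w ord_max 0).
Proof.
rewrite /qvec -[w]scale1r qinnerZ qscale_conj mulr1 qinnerE !mxE /= !mul1r.
by rewrite /qfst /qsnd; case: l.2; rewrite /= ?rmorphN ?rmorph_nat ?conjC1.
Qed.

Lemma qvec_norm l : qinner (qvec l) (qvec l) = 1.
Proof.
rewrite qinner_qvec {2}/qvec !mxE /=.
set c := sqrtC _; have -> : qfst l * (c * qfst l) + qsnd l * (c * qsnd l)
    = c * (qfst l * qfst l + qsnd l * qsnd l) by ring.
have -> : qfst l * qfst l + qsnd l * qsnd l = qnorm2 l.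
  by rewrite /qfst /qsnd /qnorm2 natrD natrX; case: l.2 => /=; ring.
by rewrite mulrA -expr2 sqrtCK mulVf ?qnorm2_neq0.
Qed.

Lemma qvec_orth l l' : complementary l l' -> qinner (qvec l) (qvec l') = 0.
Proof.
case: l l' => k b [k' b'] /andP [/= /eqP <- /= b'E].
rewrite qinner_qvec {2}/qvec !mxE /= /qfst /qsnd /=.
by case: b b'E; case: b' => //= _; ring.
Qed.

Lemma qdet_neq0 l l' : l != l' -> qfst l * qsnd l' - qfst l' * qsnd l != 0.
Proof.
case: l l' => [k []] [l []] /= hne; rewrite /qfst /qsnd /=.
- rewrite (_ : _ - _ = l%:R - k%:R); last by ring.
  by rewrite subr_eq0 eqr_nat; apply: contra hne => /eqP ->.
- rewrite (_ : _ - _ = - (1 + k * l)%N%:R); last by rewrite natrD natrM; ring.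
  by rewrite oppr_eq0 pnatr_eq0; lia.
- rewrite (_ : _ - _ = (1 + k * l)%N%:R); last by rewrite natrD natrM; ring.
  by rewrite pnatr_eq0; lia.
- rewrite (_ : _ - _ = l%:R - k%:R); last by ring.
  by rewrite subr_eq0 eqr_nat; apply: contra hne => /eqP ->.
Qed.

Lemma cramer2 (a b a' b' x y : C) :
  a * x + b * y = 0 -> a' * x + b' * y = 0 -> a * b' - a' * b != 0 ->
  x = 0 /\ y = 0.
Proof.
move=> h1 h2 hd.
have ex : (a * b' - a' * b) * x = b' * (a * x + b * y) - b * (a' * x + b' * y).
  by ring.
have ey : (a * b' - a' * b) * y = a * (a' * x + b' * y) - a' * (a * x + b * y).
  by ring.
rewrite h1 h2 !mulr0 subrr in ex ey.
by move/eqP: ex; move/eqP: ey; rewrite !mulf_eq0 (negbTE hd) /= => /eqP -> /eqP ->.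
Qed.

Lemma qvec_orth_uniq l l' w : w != 0 ->
  qinner (qvec l) w = 0 -> qinner (qvec l') w = 0 -> l = l'.
Proof.
move=> wn0; rewrite !qinner_qvec => /eqP + /eqP.
rewrite !mulf_eq0 !(negbTE (qscale_neq0 _)) /= => /eqP h1 /eqP h2.
apply/eqP; apply: contraNT wn0 => hne.
have [x0 y0] := cramer2 h1 h2 (qdet_neq0 hne).
apply/eqP/matrixP => i j; rewrite mxE (ord1 j).
case: i => [[|[|i]] hi] //.
- by rewrite -x0; congr (w _ _); apply: val_inj.
- by rewrite -y0; congr (w _ _); apply: val_inj.
Qed.

End QubitVectors.

Definition labelling p := {ffun 'I_p -> label}.

(* These are the combinatorial shadows of the orthogonality and the
   unextendibility conditions of a UPB. *)
Definition design p (D : seq (labelling p)) :=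
  [/\ uniq D,
      (forall u w, u \in D -> w \in D -> u != w ->
         exists j, complementary (u j) (w j)) &
      (forall c : 'I_p -> label, exists2 u, u \in D & forall j, u j != c j)].

Definition has_design p s := exists D : seq (labelling p), design D /\ size D = s.

Section Realization.
Variable C : numClosedFieldType.
Local Open Scope ring_scope.

Lemma inner_prodvec p (v w : 'I_p -> 'cV[C]_2) :
  inner (prodvec v) (prodvec w) = \prod_j qinner (v j) (w j).
Proof.
rewrite /inner /qinner bigA_distr_bigA /=; apply: eq_bigr => x _.
by rewrite !ffunE rmorph_prod -big_split.
Qed.

Lemma prodvec_neq0 p (w : 'I_p -> 'cV[C]_2) j : prodvec w != 0 -> w j != 0.
Proof.
apply: contraNneq => wj0; apply/eqP/ffunP => x; rewrite !ffunE.
by rewrite (bigD1 j) //= wj0 mxE mul0r.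
Qed.

Definition lvec p (u : labelling p) : tvec C p := prodvec (fun j => qvec C (u j)).

Lemma lvec_norm p (u : labelling p) : inner (lvec u) (lvec u) = 1.
Proof. by rewrite inner_prodvec big1 // => j _; rewrite qvec_norm. Qed.

Lemma lvec_orth p (u w : labelling p) j :
  complementary (u j) (w j) -> inner (lvec u) (lvec w) = 0.
Proof. by move=> cj; rewrite inner_prodvec (bigD1 j) //= qvec_orth // mul0r. Qed.

Lemma lvec_inj_design p (D : seq (labelling p)) :
  design D -> {in D &, injective (@lvec p)}.
Proof.
case=> _ orth _ u w uD wD e; apply/eqP; apply: contraT => ne.
have [j cj] := orth u w uD wD ne.
by move: (lvec_orth cj); rewrite -e lvec_norm => /eqP; rewrite oner_eq0.
Qed.

(* No nonzero product vector is orthogonal to all the vectors of a design: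
   label position j by the (unique, by qvec_orth_uniq) label whose vector is
   orthogonal to the j-th factor, and take a member of D avoiding that
   labelling; it is orthogonal to no factor, hence not to the vector. *)
Lemma design_unextendible p (D : seq (labelling p)) (w : 'I_p -> 'cV[C]_2) :
  design D -> prodvec w != 0 -> exists2 u, u \in D & inner (lvec u) (prodvec w) != 0.
Proof.
case=> _ _ avoid wn0.
pose orth_at j (u : labelling p) := qinner (qvec C (u j)) (w j) == 0.
pose u0 : labelling p := [ffun => (0%N, false)].
pose c j := if has (orth_at j) D then nth u0 D (find (orth_at j) D) j else (0%N, false).
have [u uD hu] := avoid c; exists u => //.
rewrite inner_prodvec prodf_seq_neq0; apply/allP => j _ /=; apply: contraNN (hu j) => hj.
have hD : has (orth_at j) D by apply/hasP; exists u.
have /eqP hc := nth_find u0 hD.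
by rewrite /c hD (qvec_orth_uniq (prodvec_neq0 j wn0) (eqP hj) hc).
Qed.

Lemma upb_of_design p s : has_design p s ->
  exists S : seq (tvec C p), is_UPB S /\ size S = s.
Proof.
case=> D [dD <-]; exists (map (@lvec p) D); rewrite size_map; split => //.
have [uniqD orth _] := dD.
split; first by rewrite map_inj_in_uniq //; apply: lvec_inj_design.
split.
  by move=> _ /mapP [u uD ->]; split; [exists (fun j => qvec C (u j)) | apply: lvec_norm].
split.
  move=> _ _ /mapP [u uD ->] /mapP [w wD ->] ne.
  have [|j cj] := orth u w uD wD; first by apply: contraNneq ne => ->.
  exact: lvec_orth cj.
move=> _ [w ->] wn0 horth; have [u uD] := design_unextendible dD wn0.
by rewrite horth ?eqxx // map_f.
Qed.

End Realization.

Definition join p q (r : labelling p) (t : labelling q) : labelling (p + q) :=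
  [ffun j => match split j with inl a => r a | inr b => t b end].

Lemma join_l p q (r : labelling p) (t : labelling q) a : join r t (lshift q a) = r a.
Proof. by rewrite ffunE (unsplitK (inl a : 'I_p + 'I_q)). Qed.

Lemma join_r p q (r : labelling p) (t : labelling q) b : join r t (rshift p b) = t b.
Proof. by rewrite ffunE (unsplitK (inr b : 'I_p + 'I_q)). Qed.

Lemma join_inj p q (r r' : labelling p) (t t' : labelling q) :
  join r t = join r' t' -> r = r' /\ t = t'.
Proof.
move=> e; split; apply/ffunP => j; first by rewrite -(join_l r t) e join_l.
by rewrite -(join_r r t) e join_r.
Qed.

Lemma design_glue p q (T : seq (labelling q)) (f : labelling q -> seq (labelling p)) :
  design T -> (forall t, t \in T -> design (f t)) ->
  design [seq join r t | t <- T, r <- f t].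
Proof.
case=> uniqT orthT avoidT hf; split.
- apply: allpairs_uniq_dep => //; first by move=> t /hf [].
  by move=> [t1 r1] [t2 r2] _ _ /= /join_inj [-> ->].
- move=> _ _ /allpairsPdep [t [r [tT rf ->]]] /allpairsPdep [t' [r' [tT' rf' ->]]] ne.
  have [et | net] := eqVneq t t'.
    subst t'; have [_ orthf _] := hf t tT.
    have [|j cj] := orthf r r' rf rf'; first by apply: contraNneq ne => ->.
    by exists (lshift q j); rewrite !join_l.
  have [j cj] := orthT t t' tT tT' net.
  by exists (rshift p j); rewrite !join_r.
- move=> c; have [t tT ht] := avoidT (fun j => c (rshift p j)).
  have [_ _ avoidf] := hf t tT; have [r rf hr] := avoidf (fun j => c (lshift q j)).
  exists (join r t); first exact: (allpairs_f_dep (fun t r => join r t) tT rf).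
  by move=> j; rewrite -(splitK j); case: (split j) => a /=; rewrite ?join_l ?join_r.
Qed.

(* Gluing along a design of size n on q qubits, extending one of its members
   by a design of size a and the other n - 1 by a design of size b. *)
Lemma design_substitute p q n a b :
  has_design q n -> has_design p a -> has_design p b ->
  has_design (p + q) (a + n.-1 * b).
Proof.
case=> [[|t0 T] [dT <-]] [A [dA <-]] [B [dB <-]].
  by case: dT => _ _ /(_ (fun=> (0, false))) [].
pose f t := if t == t0 then A else B.
exists [seq join r t | t <- t0 :: T, r <- f t]; split.
  by apply: design_glue => // t _; rewrite /f; case: ifP.
rewrite size_allpairs_dep /= /f eqxx; congr (_ + _).
have [/andP [t0T _] _ _] := dT.
have -> : [seq size (f t) | t <- T] = [seq size B | t <- T].
  apply/eq_in_map => t tT; rewrite /f ifN //; apply: contraNneq t0T => <- //.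
by elim: (T) => //= t T' ->; rewrite mulSn.
Qed.

Lemma has_design0 : has_design 0 1.
Proof.
exists [:: [ffun => (0, false)]]; split => //; split => //.
- by move=> u w; rewrite !inE => /eqP -> /eqP ->; rewrite eqxx.
- by move=> c; exists [ffun => (0, false)]; rewrite ?inE // => -[].
Qed.

Lemma has_design1 : has_design 1 2.
Proof.
pose u b : labelling 1 := [ffun => (0, b)].
have ne : u false != u true by apply/eqP => /ffunP /(_ ord0); rewrite !ffunE.
exists [:: u false; u true]; split => //; split.
- by rewrite /= andbT inE.
- move=> v w; rewrite !inE => /orP [] /eqP -> /orP [] /eqP -> //; rewrite ?eqxx //;
    by exists ord0; rewrite !ffunE.
- move=> c; exists (u (~~ (c ord0).2)).
    by rewrite !inE; case: (c ord0).2; rewrite eqxx ?orbT.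
  move=> j; rewrite (ord1 j) ffunE; case: (c ord0) => [k e] /=.
  by apply/eqP => -[_]; case: e.
Qed.

Lemma has_design_add p a b : has_design p a -> has_design p b -> has_design (p + 1) (a + b).
Proof. by move=> hA hB; rewrite -[b]mul1n; exact: design_substitute has_design1 hA hB. Qed.

Lemma has_design_full p : has_design p (2 ^ p).
Proof.
elim: p => [|p IH]; first exact: has_design0.
by rewrite expnS mul2n -addnn -addn1; apply: has_design_add.
Qed.

(* Round-robin tournament on the m + 1 vertices 0, ..., m (m odd): in round
   c < m, a vertex a < m plays c - a (mod m), except for the one vertex with
   2a = c (mod m), which plays the extra vertex m.  Every round is a perfect
   matching and every pair of distinct vertices meets in exactly one round. *)
Section RoundRobin.
Variable m : nat.
Hypothesis m_odd : odd m.

Definition partner (c a : nat) : nat :=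
  if a == m then (if odd c then (c + m)./2 else c./2)
  else if a <= c then (if c - a == a then m else c - a)
       else (if c + m - a == a then m else c + m - a).

Definition matched c a b :=
  (a < m /\ b < m /\ a <> b /\ (a + b = c \/ a + b = c + m)) \/
  (a = m /\ b < m /\ (2 * b = c \/ 2 * b = c + m)) \/
  (b = m /\ a < m /\ (2 * a = c \/ 2 * a = c + m)).

Lemma partner_matched c a : c < m -> a <= m -> matched c a (partner c a).
Proof. by move=> hc ha; rewrite /matched /partner; repeat case: ifP => ?; lia. Qed.

Lemma matched_sym c a b : matched c a b -> matched c b a.
Proof. rewrite /matched; lia. Qed.

Lemma matched_uniq c a b b' : matched c a b -> matched c a b' -> b = b'.
Proof. rewrite /matched; lia. Qed.

Lemma partner_le c a : c < m -> a <= m -> partner c a <= m.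
Proof. by move=> hc ha; have := partner_matched hc ha; rewrite /matched; lia. Qed.

Lemma partner_neq c a : c < m -> a <= m -> partner c a != a.
Proof.
by move=> hc ha; have := partner_matched hc ha; rewrite /matched => h; apply/eqP; lia.
Qed.

Lemma partnerK c a : c < m -> a <= m -> partner c (partner c a) = a.
Proof.
move=> hc ha; have h := partner_matched hc ha.
exact: matched_uniq (partner_matched hc (partner_le hc ha)) (matched_sym h).
Qed.

Lemma partner_meet a b : a <= m -> b <= m -> a != b ->
  exists2 c, c < m & partner c a = b.
Proof.
move=> ha hb /eqP ne.
suff [c hc hab] : exists2 c, c < m & matched c a b.
  by exists c => //; exact: matched_uniq (partner_matched hc ha) hab.
have [am | anm] := eqVneq a m.
  by exists (if 2 * b < m then 2 * b else 2 * b - m); case: ifP => ?; rewrite /matched; lia.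
have [bm | bnm] := eqVneq b m.
  by exists (if 2 * a < m then 2 * a else 2 * a - m); case: ifP => ?; rewrite /matched; lia.
by exists (if a + b < m then a + b else a + b - m); case: ifP => ?; rewrite /matched; lia.
Qed.

(* The game of a in round c, and whether a is its larger player: together
   they determine a. *)
Definition game c a := minn a (partner c a).
Definition upper c a := partner c a < a.

Lemma game_upper_inj c a b : c < m -> a <= m -> b <= m ->
  game c a = game c b -> upper c a = upper c b -> a = b.
Proof.
move=> hc ha hb; rewrite /game /upper.
have /eqP na := partner_neq hc ha; have /eqP nb := partner_neq hc hb.
have ia := partnerK hc ha; have ib := partnerK hc hb.
case: (ltnP (partner c a) a) => h1; case: (ltnP (partner c b) b) => h2 e1 e2 //; try lia.
have e' : partner c a = partner c b by lia.
by rewrite -ia e' ib.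
Qed.

Lemma game_partner c a : c < m -> a <= m ->
  game c (partner c a) = game c a /\ upper c (partner c a) = ~~ upper c a.
Proof.
move=> hc ha; rewrite /game /upper partnerK // minnC; split => //.
have /eqP := partner_neq hc ha; lia.
Qed.

End RoundRobin.

Lemma avoid_by_counting (X : finType) p (f : X -> labelling p) (c : 'I_p -> label) :
  \sum_(j < p) #|[pred x | f x j == c j]| < #|X| -> exists x, forall j, f x j != c j.
Proof.
case: (pickP [pred x | [forall j, f x j != c j]]) => [x /forallP hx | none] hsum.
  by exists x.
suff : #|X| <= \sum_(j < p) #|[pred x | f x j == c j]| by rewrite leqNgt hsum.
have cardE j : #|[pred x | f x j == c j]| = \sum_x (f x j == c j : nat).
  by rewrite -sum1_card big_mkcond; apply: eq_bigr => x _; rewrite inE; case: (_ == _).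
rewrite (eq_bigr _ (fun j _ => cardE j)) exchange_big -sum1_card; apply: leq_sum => x _.
have /existsP [j] := negbT (none x); rewrite negbK => /eqP hj.
by rewrite (bigD1 j) //= hj eqxx.
Qed.

(* Maximal number of members of the direct design below agreeing with a
   fixed label in column j: two in the columns 1..k, one elsewhere. *)
Definition column_weight k (j : nat) : nat := if (0 < j) && (j <= k) then 2 else 1.

Lemma sum_column_weight k q : \sum_(j < q) column_weight k j = q + minn k q.-1.
Proof.
elim: q => [|q IH]; first by rewrite big_ord0 minn0.
by rewrite big_ord_recr /= IH /column_weight; case: ifP => h; lia.
Qed.

(* The direct construction: for m odd and k <= m, a design of size
   2 (m + 1) on p = 2 m + 1 - k qubits.  Its members are indexed by the
   pairs (a, e) of a vertex a <= m and a bit e.  Column 0 records (a, e);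
   column j in 1..k records the game of a in round j - 1 and its side in
   it; the remaining 2 (m - k) columns come in pairs, one pair for each
   round c in k..m-1, recording the game of a and its side together with
   the bit e, twisted in the second column of the pair by the side. *)
Section Direct.
Variables m k : nat.
Hypotheses (m_odd : odd m) (k_le : k <= m).
Local Notation p := ((2 * m).+1 - k).

Definition round_of (j : nat) := k + (j - k - 1)./2.

Definition column_label (j a : nat) (e : bool) : label :=
  if j == 0 then (a, e)
  else if j <= k then (game m j.-1 a, upper m j.-1 a)
  else let c := round_of j in
    (2 * game m c a + (e (+) (odd (j - k - 1) && upper m c a)), upper m c a).

Lemma round_of_lt j : k < j -> j < p -> round_of j < m.
Proof. rewrite /round_of; lia. Qed.

(* Distinct members are complementary in column 0 if they share their
   vertex, and otherwise in a column of the round in which their vertices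
   meet (for a round c >= k, the column of its pair selected by e != e'). *)
Lemma column_label_orth a b e e' : a <= m -> b <= m -> (a, e) != (b, e') ->
  exists2 j, j < p & complementary (column_label j a e) (column_label j b e').
Proof.
move=> ha hb ne; have [ab | nab] := eqVneq a b.
  subst b; exists 0; first lia.
  by rewrite /column_label /complementary /= eqxx; apply: contraNneq ne => ->.
have [c hc pc] := partner_meet m_odd ha hb nab.
have [gE uE] := game_partner m_odd hc ha; rewrite pc in gE uE.
have [ck | kc] := ltnP c k.
  exists c.+1; first lia.
  by rewrite /column_label /= ck /complementary /= gE uE eqxx; case: upper.
pose f := e != e'; pose j := k.+1 + (2 * (c - k) + f).
have jE : j - k - 1 = 2 * (c - k) + f by rewrite /j; lia.
exists j; first by rewrite /j /f; case: (e != e'); lia.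
have rE : round_of j = c by rewrite /round_of jE /f; case: (e != e'); lia.
rewrite /column_label ifF; last by rewrite /j; lia.
rewrite ifF; last by rewrite /j; lia.
rewrite /= rE jE /complementary /= gE uE oddD oddM /= oddb /f.
by clear ne jE rE j f; case: (upper m c a); case: e; case: e'; rewrite /= ?eqxx.
Qed.

Lemma column_label_inj j a b e e' : j < p -> (j == 0) || (k < j) ->
  a <= m -> b <= m -> column_label j a e = column_label j b e' -> a = b /\ e = e'.
Proof.
move=> hj hj0 ha hb; rewrite /column_label.
have [jz | j0] := eqVneq j 0; first by subst j; case=> -> ->.
rewrite (negbTE j0) /= in hj0; rewrite (_ : j <= k = false); last by lia.
have hc := round_of_lt hj0 hj.
set c := round_of j; set g := odd (j - k - 1).
case=> e1 e2.
have [ge te] : game m c a = game m c b /\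
               e (+) (g && upper m c a) = e' (+) (g && upper m c b).
  by move: e1; case: (e (+) _); case: (e' (+) _) => /=; lia.
have ab : a = b by apply: (game_upper_inj m_odd hc).
by subst b; split => //; clear e1; move: te; case: (g && _); case: e; case: e'.
Qed.

Lemma column_label_inj_vertex j a b e e' : 0 < j <= k ->
  a <= m -> b <= m -> column_label j a e = column_label j b e' -> a = b.
Proof.
case/andP=> hj0 hjk ha hb; rewrite /column_label hjk (_ : j == 0 = false); last by lia.
case=> e1 e2; apply: (game_upper_inj m_odd _ ha hb e1 e2); lia.
Qed.

Definition direct_row (x : 'I_m.+1 * bool) : labelling p :=
  [ffun j : 'I_p => column_label j x.1 x.2].

Lemma direct_row_orth x y : x != y ->
  exists j, complementary (direct_row x j) (direct_row y j).
Proof.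
move=> ne; have ne' : (val x.1, x.2) != (val y.1, y.2).
  by apply: contraNneq ne; case: x y => [a e] [b e'] /= [/val_inj -> ->].
have [j hj cj] := column_label_orth (ltn_ord x.1) (ltn_ord y.1) ne'.
by exists (Ordinal hj); rewrite !ffunE.
Qed.

Lemma direct_row_inj : injective direct_row.
Proof.
move=> x y e; apply/eqP; apply: contraT => /direct_row_orth [j].
by rewrite e complementary_irr.
Qed.

Lemma direct_row_hits j l : #|[pred x | direct_row x j == l]| <= column_weight k j.
Proof.
rewrite /column_weight; case: ifP => hj.
  rewrite -[X in _ <= X]card_bool; apply: (@leq_card_in _ _ snd) => x y.
  rewrite !inE => /eqP hx /eqP hy hxy.
  move: hx; rewrite -hy !ffunE {hy} => /column_label_inj_vertex.
  case: x y hxy => [a e] [b e'] /= -> /(_ hj (ltn_ord a) (ltn_ord b)) ab.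
  by rewrite (val_inj ab).
apply/card_le1_eqP => x y; rewrite !inE => /eqP hx /eqP hy.
move: hx; rewrite -hy !ffunE {hy} => /column_label_inj.
have hj' : (j == 0 :> nat) || (k < j) by move: hj; lia.
case: x y => [a e] [b e'] /= /(_ (ltn_ord j) hj' (ltn_ord a) (ltn_ord b)) [ab ->].
by rewrite (val_inj ab).
Qed.

(* Unextendibility by counting: in total the members agree with any
   assignment in at most p + k = 2 m + 1 places, fewer than their number. *)
Lemma direct_design : design (map direct_row (enum {: 'I_m.+1 * bool})).
Proof.
split.
- by rewrite map_inj_uniq ?enum_uniq //; exact: direct_row_inj.
- move=> _ _ /mapP [x _ ->] /mapP [y _ ->] ne.
  by apply: direct_row_orth; apply: contraNneq ne => ->.
move=> c; have [|x hx] := avoid_by_counting (f := direct_row) (c := c).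
  apply: leq_ltn_trans; first by apply: leq_sum => j _; exact: direct_row_hits.
  by rewrite sum_column_weight card_prod card_ord card_bool; lia.
by exists (direct_row x) => //; apply: map_f; rewrite mem_enum.
Qed.

Lemma has_design_direct : has_design p (2 * m.+1).
Proof.
exists (map direct_row (enum {: 'I_m.+1 * bool})); split; first exact: direct_design.
by rewrite size_map -cardE card_prod card_ord card_bool mulnC.
Qed.

End Direct.

(* Designs of every size s divisible by 4 with p < s <= 2 p: the direct
   design with m + 1 = s / 2 and k = s - 1 - p. *)
Lemma has_design_small p s : 4 %| s -> p < s <= 2 * p -> has_design p s.
Proof.
move=> h4 /andP [h1 h2].
have := @has_design_direct (s./2.-1) (s - 1 - p).
have -> : (2 * s./2.-1).+1 - (s - 1 - p) = p by lia.
have -> : 2 * (s./2.-1).+1 = s by lia.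
by apply; lia.
Qed.

Definition admissible p s :=
  [/\ 4 %| s, p < s, s <= 2 ^ p & ~ (p %% 4 = 1 /\ s = 2 * p + 2)].

(* The one size not reached by doubling: 20 = 8 + 3 * 4 on 3 + 3 qubits,
   substituting the full 3-qubit basis into one member of a 4-member design
   on 3 qubits and 4-member designs into the other three. *)
Lemma has_design_6_20 : has_design 6 20.
Proof.
have d34 : has_design 3 4 by apply: has_design_small.
exact: (design_substitute d34 (has_design_full 3) d34).
Qed.

Lemma four_dvd_pow2 p : 2 <= p -> 4 %| 2 ^ p.
Proof. by move=> hp; rewrite -(subnK hp) expnD dvdn_mull. Qed.

Lemma pow2_lower p : 5 <= p -> 4 * p + 4 <= 2 ^ p.
Proof.
move=> hp; rewrite -(subnK hp) expnD.
by have := ltn_expl (p - 5) (isT : 1 < 2); rewrite (_ : 2 ^ 5 = 32) //; lia.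
Qed.

(* An admissible size for p + 1 strictly between 2 (p + 1) and 2 ^ (p + 1),
   other than (6, 20), splits into two admissible sizes for p: take the two
   halves rounded to multiples of 4, and shift them by 4 when one of them is
   the exceptional size. *)
Lemma admissible_split p s : admissible p.+1 s -> 2 * p.+1 < s < 2 ^ p.+1 ->
  ~ (p.+1 = 6 /\ s = 20) -> exists a b, a + b = s /\ admissible p a /\ admissible p b.
Proof.
move=> [h4 _ _ hex] /andP [hlo hhi] h620; rewrite expnS in hhi.
have p2 : 2 <= p by case: p hlo hhi h620 hex => [|[|p]] //; rewrite ?expn0 ?expn1; lia.
have d4 := four_dvd_pow2 p2; have big := @pow2_lower p.
pose a := 4 * (s %/ 8).
case: (boolP ((p %% 4 == 1) && ((a == 2 * p + 2) || (s - a == 2 * p + 2)))) => h.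
  by exists (a - 4), (s - a + 4); rewrite /admissible /a in h *; repeat split; lia.
by exists a, (s - a); rewrite /admissible /a in h *; repeat split; lia.
Qed.

(* Designs exist for all admissible sizes, by induction on p: small sizes
   directly, the full size by the computational basis, (6, 20) sporadically,
   and all other sizes by doubling two admissible sizes for p - 1. *)
Lemma has_design_admissible p s : admissible p s -> has_design p s.
Proof.
elim: p s => [|p IH] s [h4 h1 h2 hex]; first by rewrite expn0 in h2; lia.
have [hs | hs] := leqP s (2 * p.+1); first by apply: has_design_small; rewrite ?h1.
have [-> | hf] := eqVneq s (2 ^ p.+1); first exact: has_design_full.
have [/andP [/eqP -> /eqP ->] | h620] := boolP ((p.+1 == 6) && (s == 20)).
  exact: has_design_6_20.
have hrange : 2 * p.+1 < s < 2 ^ p.+1 by rewrite hs ltn_neqAle hf h2.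
have n620 : ~ (p.+1 = 6 /\ s = 20) by move=> [p6 s20]; rewrite p6 s20 in h620.
have [a [b [<- [ha hb]]]] := admissible_split (And4 h4 h1 h2 hex) hrange n620.
by rewrite -addn1; apply: has_design_add; apply: IH.
Qed.

Theorem theorem2 (C : numClosedFieldType) (p s : nat) :
  (p.+1 <= s <= 2 ^ p)%N -> (4 %| s)%N ->
  ~ (p %% 4 = 1 /\ s = (2 * p + 2))%N ->
  exists S : seq (tvec C p), is_UPB S /\ size S = s.
Proof.
move=> /andP [h1 h2] h4 hex.
by apply: upb_of_design; apply: has_design_admissible.
Qed.
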